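(* Let $G$ be a finite simple graph on $n$ vertices having $t\geq 2$ cut vertices. Then $\mathrm{nRel}(G;p)$ has at least one fixed point in $(0,1)$, i.e. there exists $p\in(0,1)$ with $\mathrm{nRel}(G;p)=p$.
   Context: For a graph $G$ on $n$ vertices, a connected set is a nonempty vertex subset $C$ such that the induced subgraph $G[C]$ is connected. The node reliability of $G$ is the polynomial \[ \mathrm{nRel}(G;p)=\sum_{C}p^{|C|}(1-p)^{n-|C|}, \] the sum over all connected sets $C$ of $G$. *)

From HB Require Import structures.
From mathcomp Require Import all_boot all_order all_algebra.
From mathcomp Require Import reals.
Set Implicit Arguments. Unset Strict Implicit. Unset Printing Implicit Defensive.
Import Order.TTheory GRing.Theory Num.Theory.

Definition simple_graph (T : finType) (e : rel T) : Prop :=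
  symmetric e /\ irreflexive e.

Definition induced (T : finType) (e : rel T) (S : {set T}) : rel T :=
  [rel x y | [&& x \in S, y \in S & e x y]].

Definition connected_set (T : finType) (e : rel T) (C : {set T}) : bool :=
  (C != set0) && [forall x in C, forall y in C, connect (induced e C) x y].

Definition ncomp (T : finType) (e : rel T) (S : {set T}) : nat :=
  #|[set [set y in S | connect (induced e S) x y] | x in S]|.

Definition cut_vertex (T : finType) (e : rel T) (v : T) : bool :=
  ncomp e [set: T] < ncomp e [set~ v].

Local Open Scope ring_scope.

Definition nRel (R : realType) (T : finType) (e : rel T) (p : R) : R :=
  \sum_(C : {set T} | connected_set e C) p ^+ #|C| * (1 - p) ^+ (#|T| - #|C|).

From HB Require Import structures.
From mathcomp Require Import all_boot all_order all_algebra.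
From mathcomp Require Import reals.
From mathcomp Require Import ring lra.
Import Order.TTheory GRing.Theory Num.Theory.

Set Implicit Arguments.
Unset Strict Implicit.
Unset Printing Implicit Defensive.

Local Open Scope ring_scope.

(* nRel(p) is the probability that the surviving vertices span a connected
   subgraph when each vertex survives independently with probability p.
   The n singletons are connected, so nRel(p) >= n p (1-p)^(n-1), which is
   at least p at p = 1/n by Bernoulli's inequality.  For a cut vertex v the
   set V - v is disconnected, so nRel(p) <= 1 - t p^(n-1) (1-p); with t >= 2
   this is at most p at p = 1 - 1/(2n).  The intermediate value theorem for
   the polynomial X - nRel(X) yields the fixed point. *)

Section SubsetWeight.
Variables (R : comNzRingType) (T : finType).

(* The probability that exactly the vertices of C survive. *)
Definition subset_weight (p : R) (C : {set T}) : R :=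
  p ^+ #|C| * (1 - p) ^+ (#|T| - #|C|).

Lemma sum_subset_weight (p : R) : \sum_(C : {set T}) subset_weight p C = 1.
Proof.
transitivity (\prod_(i : T) (p + (1 - p))); last by rewrite subrKC big1_eq.
rewrite bigA_distr; apply: eq_bigr => C _.
rewrite (bigID (mem C)) /= (eq_bigr (fun _ => p)) => [|i -> //].
rewrite [X in _ * X](eq_bigr (fun _ => 1 - p)) => [|i /negbTE -> //].
rewrite !prodr_const /subset_weight -(cardC C) addKn.
by congr (_ * _ ^+ _); apply: eq_card => i; rewrite !inE.
Qed.

End SubsetWeight.

Lemma horner_subset_weight (R : comNzRingType) (T : finType) (p : R) (C : {set T}) :
  (subset_weight 'X C).[p] = subset_weight p C.
Proof. by rewrite /subset_weight !hornerE. Qed.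

Lemma ler_sum_subpred (R : numDomainType) (I : finType) (P Q : pred I)
    (F : I -> R) :
  (forall i, P i -> Q i) -> (forall i, Q i -> 0 <= F i) ->
  \sum_(i | P i) F i <= \sum_(i | Q i) F i.
Proof.
move=> PQ F_ge0; rewrite [leRHS](bigID P) /=.
rewrite (eq_bigl P) => [|i]; last exact/andb_idl/PQ.
by rewrite lerDl sumr_ge0 // => i /andP[/F_ge0].
Qed.

Lemma bernoulli_ineq (R : realDomainType) (x : R) (k : nat) :
  x <= 1 -> 1 - k%:R * x <= (1 - x) ^+ k.
Proof.
move=> x_le1; elim: k => [|k IHk]; first by rewrite mul0r subr0 expr0.
rewrite exprSr -natr1.
have : (1 - k%:R * x) * (1 - x) <= (1 - x) ^+ k * (1 - x).
  by rewrite ler_wpM2r // subr_ge0.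
have : 0 <= k%:R * x ^+ 2 by rewrite mulr_ge0 ?sqr_ge0.
nra.
Qed.

Section ComponentCount.
Variables (T : finType) (e : rel T).

Lemma ncomp_gt0 (S : {set T}) : S != set0 -> (0 < ncomp e S)%N.
Proof. by rewrite /ncomp card_gt0 imset_eq0. Qed.

Lemma ncomp_connected_set (S : {set T}) : connected_set e S -> ncomp e S = 1%N.
Proof.
case/andP=> S_n0 /forall_inP S_conn; have [x xS] := set0Pn _ S_n0.
rewrite /ncomp -(cards1 S).
suff -> : [set [set y in S | connect (induced e S) z y] | z in S] = [set S] by [].
have comp_eq y : y \in S -> [set z in S | connect (induced e S) y z] = S.
  by move=> yS; apply/setP => z; rewrite inE andb_idr // => /(forall_inP (S_conn y yS)).
apply/setP => A; rewrite inE; apply/imsetP/eqP => [[y yS ->]|->]; first exact: comp_eq.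
by exists x; rewrite ?comp_eq.
Qed.

Lemma cut_vertex_disconnected (v : T) :
  cut_vertex e v -> ~~ connected_set e [set~ v].
Proof.
rewrite /cut_vertex; apply: contraTN => /ncomp_connected_set ->.
rewrite ltnS leqn0 -lt0n ncomp_gt0 //.
by apply/set0Pn; exists v; rewrite inE.
Qed.

End ComponentCount.

Section NodeReliability.
Variables (R : realType) (T : finType) (e : rel T).
Implicit Types (p : R) (C : {set T}).

Lemma nRelE p : nRel e p = \sum_(C | connected_set e C) subset_weight p C.
Proof. by []. Qed.

Lemma subset_weight_ge0 p C : 0 <= p <= 1 -> 0 <= subset_weight p C.
Proof. by case/andP=> p_ge0 p_le1; rewrite mulr_ge0 ?exprn_ge0 ?subr_ge0. Qed.

Lemma connected_set1 (x : T) : connected_set e [set x].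
Proof.
rewrite /connected_set -card_gt0 cards1 /=; apply/forall_inP => y /set1P->.
by apply/forall_inP => z /set1P->; exact: connect0.
Qed.

Lemma nRel_ge_singletons p : 0 <= p <= 1 ->
  #|T|%:R * (p * (1 - p) ^+ (#|T| - 1)) <= nRel e p.
Proof.
move=> p01; rewrite nRelE.
apply: le_trans (ler_sum_subpred (P := fun C => #|C| == 1%N) _ _); last 2 first.
- by move=> C /cards1P[x ->]; exact: connected_set1.
- by move=> C _; exact: subset_weight_ge0.
rewrite big_cards1 (eq_bigr (fun _ => p * (1 - p) ^+ (#|T| - 1))).
  by rewrite sumr_const mulr_natl.
by move=> x _; rewrite /subset_weight cards1 expr1.
Qed.

Lemma nRel_le_cut_vertices p : 0 <= p <= 1 ->
  nRel e p <= 1 - #|[set v | cut_vertex e v]|%:R * (p ^+ (#|T| - 1) * (1 - p)).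
Proof.
move=> p01; set cuts := [set v | cut_vertex e v].
have -> : #|cuts|%:R * (p ^+ (#|T| - 1) * (1 - p)) =
          \sum_(C in [set [set~ v] | v in cuts]) subset_weight p C.
  rewrite big_imset /=; last by move=> u v _ _ /setC_inj/set1_inj.
  rewrite (eq_bigr (fun _ => p ^+ (#|T| - 1) * (1 - p))) ?sumr_const ?mulr_natl //.
  move=> v _; have T_gt0 : (0 < #|T|)%N by apply/card_gt0P; exists v.
  by rewrite /subset_weight cardsC1 -subn1 subKn // expr1.
rewrite -(sum_subset_weight T p) (bigID (connected_set e)) /= -nRelE.
rewrite lerBrDr lerD2l; apply: ler_sum_subpred => [C /imsetP[v]|C _].
  by rewrite inE => /cut_vertex_disconnected ? ->.
exact: subset_weight_ge0.
Qed.

Lemma nRel_ge_inv_card : (0 < #|T|)%N -> #|T|%:R^-1 <= nRel e (#|T|%:R^-1 : R).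
Proof.
move=> T_gt0; set n := #|T|; set a : R := n%:R^-1.
have n_gt0 : 0 < n%:R :> R by rewrite ltr0n.
have na : n%:R * a = 1 by rewrite mulfV ?gt_eqF.
have a01 : 0 <= a <= 1 by rewrite invr_ge0 ltW // invf_le1 // ler1n.
apply: le_trans _ (nRel_ge_singletons a01); rewrite -/n mulrA na mul1r.
apply: le_trans _ (bernoulli_ineq _ _); last by case/andP: a01.
rewrite natrB // mulrBl na mul1r; lra.
Qed.

Lemma nRel_le_one_sub_half_inv_card :
  (2 <= #|[set v | cut_vertex e v]|)%N ->
  nRel e (1 - (#|T|%:R *+ 2)^-1 : R) <= 1 - (#|T|%:R *+ 2)^-1.
Proof.
move=> t_ge2; set t := #|_| in t_ge2; set n := #|T|; set c : R := (n%:R *+ 2)^-1.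
have n_ge2 : (2 <= n)%N by apply: leq_trans t_ge2 (max_card _).
have n_gt0 : 0 < n%:R :> R by rewrite ltr0n ltnW.
have nc : n%:R * c = 2^-1 by rewrite /c -mulr_natr; field; rewrite gt_eqF.
have n2 : 2 <= n%:R :> R by rewrite ler_nat.
have c_ge0 : 0 <= c by rewrite invr_ge0 mulrn_wge0 ?ltW.
have c01 : 0 <= c <= 1 by apply/andP; split; nra.
have b01 : 0 <= 1 - c <= 1 by lra.
apply: le_trans (nRel_le_cut_vertices b01) _; rewrite -/n -/t subKr lerD2l lerN2.
have : 1 - (n - 1)%:R * c <= (1 - c) ^+ (n - 1) by apply: bernoulli_ineq; lra.
rewrite natrB ?(ltnW n_ge2) // mulrBl nc mul1r; set w := (1 - c) ^+ _ => w_ge.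
have t2 : 2 <= t%:R :> R by rewrite ler_nat.
have : 1 <= t%:R * w by nra.
nra.
Qed.

Definition nRel_poly : {poly R} := \sum_(C | connected_set e C) subset_weight 'X C.

Lemma horner_nRel_poly p : nRel_poly.[p] = nRel e p.
Proof. by rewrite horner_sum; apply: eq_bigr => C _; exact: horner_subset_weight. Qed.

Lemma nRel_fixed_point_between (a b : R) :
  a <= b -> a <= nRel e a -> nRel e b <= b ->
  exists2 p, a <= p <= b & nRel e p = p.
Proof.
move=> ab a_le b_ge.
have sign_change : ('X - nRel_poly).[a] <= 0 <= ('X - nRel_poly).[b].
  by rewrite !hornerE !horner_nRel_poly subr_le0 subr_ge0 a_le b_ge.
have [p ab_p /rootP] := poly_ivt ab sign_change.
by rewrite !hornerE horner_nRel_poly => /eqP; rewrite subr_eq0 => /eqP p_fix; exists p.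
Qed.

End NodeReliability.

Theorem corollary4p2 (R : realType) (T : finType) (e : rel T) :
  simple_graph e ->
  (2 <= #|[set v | cut_vertex e v]|)%N ->
  exists p : R, 0 < p < 1 /\ nRel e p = p.
Proof.
move=> _ t_ge2; have n_ge2 : (2 <= #|T|)%N := leq_trans t_ge2 (max_card _).
have := nRel_ge_inv_card R e (ltnW n_ge2); have := nRel_le_one_sub_half_inv_card R t_ge2.
have n2 : 2 <= #|T|%:R :> R by rewrite ler_nat.
have na : #|T|%:R * #|T|%:R^-1 = 1 :> R by rewrite mulfV // gt_eqF //; lra.
have nc : #|T|%:R * (#|T|%:R *+ 2)^-1 = 2^-1 :> R.
  by rewrite -mulr_natr; field; rewrite gt_eqF //; lra.
move: na nc; set a := _^-1; set c := _^-1 => na nc b_ge a_le.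
have a_gt0 : 0 < a by rewrite invr_gt0; lra.
have c_gt0 : 0 < c by rewrite invr_gt0; lra.
have [|p /andP[a_le_p p_le_b] fix_p] := nRel_fixed_point_between _ a_le b_ge; first nra.
by exists p; split=> //; apply/andP; split; lra.
Qed.
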